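(* Let $q$ be a prime power, $m,\eta,\ell,k\ge1$, $n=\ell\eta$, $\mu=\min\{m,\eta\}$, and integers $0\le w\le v\le\ell\mu$. Let $\alpha$ be a probability mass function on $\mathcal{W}(v,\ell,\mu)$ and let $\boldsymbol{\mathcal{F}}=\mathcal{F}_1\times\dots\times\mathcal{F}_\ell$ be drawn by first drawing $\mathbf{v}\sim\alpha$ and then each $\mathcal{F}_i$ independently and uniformly among the $v_i$-dimensional subspaces of $\mathbb{F}_q^\mu$. Let $\mathbf{y}\in\mathbb{F}_{q^m}^n$ be fixed, and let $\mathbf{c}_1,\dots,\mathbf{c}_{q^{mk}-1}$ be independent uniformly random vectors of $\mathbb{F}_{q^m}^n$ (the codewords of a random code other than the transmitted one), independent of $\boldsymbol{\mathcal{F}}$. Let $\mathcal{X}$ be the event that there exists $j$ such that $\mathrm{wt}_{\Sigma R}(\mathbf{y}-\mathbf{c}_j)=w$ and the support $\mathcal{E}'_1\times\dots\times\mathcal{E}'_\ell$ of $\mathbf{y}-\mathbf{c}_j$ satisfies $\mathcal{E}'_i\subseteq\mathcal{F}_i$ for all $i$. Then $$\Pr[\mathcal{X}]\le q^{m(k-n)}\sum_{\mathbf{w}\in\mathcal{W}(w,\ell,\mu)}\bar\varphi(\mathbf{w})\prod_{i=1}^{\ell}\mathrm{NM}_q(m,\eta,w_i),$$ where $\bar\varphi(\mathbf{w})\coloneqq\sum_{\mathbf{v}\in\mathcal{W}(v,\ell,\mu)}\alpha(\mathbf{v})\prod_{i=1}^{\ell}\Phi_\mu(w_i\subseteq v_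i)$.
   Context: Gaussian binomial: $\begin{bmatrix}a\\ b\end{bmatrix}_q=\prod_{i=0}^{b-1}\frac{q^{a-i}-1}{q^{b-i}-1}$. $\mathcal{W}(w,\ell,\mu)\coloneqq\{\mathbf{w}\in\{0,\dots,\mu\}^{\ell}:\sum_i w_i=w\}$. $\Phi_\mu(a\subseteq b)\coloneqq\begin{bmatrix}b\\ a\end{bmatrix}_q/\begin{bmatrix}\mu\\ a\end{bmatrix}_q$ if $a\le b$ and $0$ if $a>b$. $\mathrm{NM}_q(m,\eta,r)\coloneqq\prod_{j=0}^{r-1}\frac{(q^m-q^j)(q^\eta-q^j)}{q^r-q^j}$ (number of $m\times\eta$ matrices over $\mathbb{F}_q$ of rank $r$). A vector $\mathbf{x}\in\mathbb{F}_{q^m}^{n}$ is split into $\ell$ consecutive blocks of length $\eta$; via a fixed $\mathbb{F}_q$-basis of $\mathbb{F}_{q^m}$ each block is an $m\times\eta$ matrix over $\mathbb{F}_q$. The sum-rank weight $\mathrm{wt}_{\Sigma R}(\mathbf{x})$ is the sum of the ranks of these block matrices. The support of $\mathbf{x}$ is $\mathcal{E}_1\times\dots\times\mathcal{E}_\ell$, where $\mathcal{E}_i\subseteq\mathbb{F}_q^\mu$ is the row space of the $i$-th block matrix if $\eta\le m$ and its column space if $\eta>m$. *)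

From HB Require Import structures.
From mathcomp Require Import all_boot all_order all_algebra.
Set Implicit Arguments. Unset Strict Implicit. Unset Printing Implicit Defensive.
Import Order.TTheory GRing.Theory Num.Theory.
Local Open Scope ring_scope.

(* F_{q^m}^n is modelled, through a fixed F_q-basis of F_{q^m}, as the
   l-tuple of its m x eta blocks over F_q (= K, #|K| = q). *)
Definition vecT (K : finFieldType) (m eta l : nat) :=
  {ffun 'I_l -> 'M[K]_(m, eta)}.

Definition Wset (l mu w : nat) : {set {ffun 'I_l -> 'I_mu.+1}} :=
  [set x : {ffun 'I_l -> 'I_mu.+1} | (\sum_(i < l) (x i : nat) == w)%N].

(* Subspaces of F_q^mu of dimension d, each represented canonically by the
   square matrix <<U>> whose row space it is. *)
Definition subspaces (K : finFieldType) (mu d : nat) : {set 'M[K]_mu} :=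
  [set U : 'M[K]_mu | (<<U>>%MS == U) && (\rank U == d)%N].

(* Support subspace E of an m x eta block, in F_q^mu with mu = minn m eta:
   row space if eta <= m, column space otherwise. conform_mx is the identity
   cast in the relevant branch (dimensions agree there). *)
Definition blk_supp (K : finFieldType) (m eta : nat) (B : 'M[K]_(m, eta))
  : 'M[K]_(minn m eta) :=
  if (eta <= m)%N then <<conform_mx (0 : 'M[K]_(m, minn m eta)) B>>%MS
  else <<conform_mx (0 : 'M[K]_(eta, minn m eta)) B^T>>%MS.

Definition wtSR (K : finFieldType) (m eta l : nat) (x : vecT K m eta l) : nat :=
  (\sum_(i < l) \rank (x i))%N.

Definition good (K : finFieldType) (m eta l w : nat)
  (F : {ffun 'I_l -> 'M[K]_(minn m eta)}) (x : vecT K m eta l) : bool :=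
  (wtSR x == w) && [forall i, (blk_supp (x i) <= F i)%MS].

Definition prob_codewords (R : realFieldType) (K : finFieldType) (m eta l w N : nat)
  (F : {ffun 'I_l -> 'M[K]_(minn m eta)}) (y : vecT K m eta l) : R :=
  (#|[set c : {ffun 'I_N -> vecT K m eta l} |
        [exists j, good w F [ffun i => y i - c j i]]]|)%:R
  / (#|{: vecT K m eta l}| ^ N)%:R.

Definition probX (R : realFieldType) (K : finFieldType) (m eta l v w N : nat)
  (alpha : {ffun 'I_l -> 'I_(minn m eta).+1} -> R) (y : vecT K m eta l) : R :=
  \sum_(vv in Wset l (minn m eta) v) alpha vv *
    \sum_(F : {ffun 'I_l -> 'M[K]_(minn m eta)}
           | [forall i, F i \in subspaces K (minn m eta) (vv i)])
      ((\prod_(i < l) (#|subspaces K (minn m eta) (vv i)|)%:R)^-1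
       * prob_codewords R w N F y).

Definition gauss_binom (R : realFieldType) (q a b : nat) : R :=
  \prod_(i < b) (((q%:R : R) ^+ (a - i) - 1) / ((q%:R : R) ^+ (b - i) - 1)).

Definition Phi (R : realFieldType) (q mu a b : nat) : R :=
  if (a <= b)%N then gauss_binom R q b a / gauss_binom R q mu a else 0.

Definition NM (R : realFieldType) (q m eta r : nat) : R :=
  \prod_(j < r) ((((q%:R : R) ^+ m - (q%:R) ^+ j) * ((q%:R : R) ^+ eta - (q%:R) ^+ j))
                 / ((q%:R : R) ^+ r - (q%:R) ^+ j)).

Definition phibar (R : realFieldType) (q l mu v : nat)
  (alpha : {ffun 'I_l -> 'I_mu.+1} -> R) (ww : {ffun 'I_l -> 'I_mu.+1}) : R :=
  \sum_(vv in Wset l mu v) alpha vv * \prod_(i < l) Phi R q mu (ww i) (vv i).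

From HB Require Import structures.
From mathcomp Require Import all_boot all_order all_algebra.
From mathcomp Require Import ring zify.
Set Implicit Arguments. Unset Strict Implicit. Unset Printing Implicit Defensive.
Import Order.TTheory GRing.Theory Num.Theory.
Local Open Scope ring_scope.

(* A union bound over the q^(mk) - 1 codewords bounds the
   probability by q^(m(k-n)) times the number of x of sum-rank weight w whose
   support lies in F, and this number factorises over the blocks.  Counting
   matrices row by row, the p x s matrices of rank r whose rows lie in a
   d-dimensional space are as many as the p x d matrices of rank r, namely
   NM_q(p, d, r); for a block (p = max(m, eta)) this is
   NM_q(m, eta, r) Phi_mu(r <= d).  Hence the bound only depends on the
   dimension profile of F, and averaging it against alpha yields phibar. *)


Lemma card_ffun_forall (aT rT : finType) (A : aT -> {set rT}) :
  #|[set f : {ffun aT -> rT} | [forall x, f x \in A x]]| = (\prod_x #|A x|)%N.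
Proof.
transitivity #|(family (fun x => [pred y | y \in A x]) : simpl_pred {ffun aT -> rT})|.
  by apply: eq_card => f; rewrite inE; apply/forallP/familyP.
by rewrite card_family foldrE big_map big_enum; apply: eq_bigr => x _; apply: eq_card.
Qed.

Lemma card_pair_sum (A B : finType) (Q : A -> B -> bool) :
  #|[set ab : A * B | Q ab.1 ab.2]| = (\sum_b #|[set a | Q a b]|)%N.
Proof.
rewrite -sum1dep_card -(pair_big_dep xpredT Q (fun _ _ => 1%N) (op := addn) (idx := 0%N)).
rewrite (exchange_big_dep xpredT) //=.
by apply: eq_bigr => b _; rewrite sum1dep_card.
Qed.

Lemma card_ffun_exists_leq (T : finType) (N : nat) (P : pred T) :
  (#|[set c : {ffun 'I_N -> T} | [exists j, P (c j)]]| <= N * #|P| * #|T| ^ N.-1)%N.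
Proof.
have card_at (j : 'I_N) : #|[set c : {ffun 'I_N -> T} | P (c j)]| = (#|P| * #|T| ^ N.-1)%N.
  pose A i := if i == j then [set x | P x] else [set: T].
  have -> : [set c : {ffun 'I_N -> T} | P (c j)] =
            [set c : {ffun 'I_N -> T} | [forall i, c i \in A i]].
    apply/setP => c; rewrite !inE; apply/idP/forallP => [Pc i | /(_ j)].
      by rewrite /A; case: eqP => [->|]; rewrite !inE.
    by rewrite /A eqxx inE.
  rewrite card_ffun_forall (bigD1 j) //= /A eqxx cardsE (eq_bigr (fun _ => #|T|)).
    by rewrite prod_nat_const cardC1 card_ord.
  by move=> i /negbTE ->; rewrite cardsT.
apply: (@leq_trans (\sum_(j < N) #|[set c : {ffun 'I_N -> T} | P (c j)]|)); last first.
  by rewrite (eq_bigr _ (fun j _ => card_at j)) big_const_ord iter_addn_0 mulnC mulnA.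
rewrite -sum1dep_card big_mkcond /=.
rewrite (eq_bigr (fun j : 'I_N => \sum_(c : {ffun 'I_N -> T}) (P (c j) : nat))%N); last first.
  by move=> j _; rewrite -sum1dep_card big_mkcond.
rewrite exchange_big leq_sum // => c _.
by case: existsP => // -[j Pj]; rewrite (bigD1 j) //= Pj.
Qed.

Section RankCount.
Variable K : finFieldType.
Local Notation q := #|K|.

Lemma card_rV_submx n s (A : 'M[K]_(n, s)) :
  #|[set u : 'rV[K]_s | (u <= A)%MS]| = (q ^ \rank A)%N.
Proof.
have -> : [set u : 'rV[K]_s | (u <= A)%MS] = [set w *m row_base A | w : 'rV_(\rank A)].
  apply/setP => u; rewrite inE -(eq_row_base A); apply/submxP/imsetP => [[w ->]|[w _ ->]].
    by exists w.
  by exists w.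
rewrite card_imset; last exact: row_free_inj (row_base_free A).
by rewrite card_mx mul1n.
Qed.

Lemma rank_col_mx_rV p s (u : 'rV[K]_s) (X : 'M[K]_(p, s)) :
  \rank (col_mx u X) = (\rank X + ~~ (u <= X)%MS)%N.
Proof.
rewrite -addsmxE addsmxC.
have := mxrank_leqif_sup (addsmxSl X u); rewrite addsmx_sub submx_refl /= => -[leXXu eqXXu].
have := mxrank_adds_leqif X u => -[leXu _].
have := rank_leq_row u; move: eqXXu; case: (u <= X)%MS => /= /eqP; lia.
Qed.

Definition count_rank_submx p n s (F : 'M[K]_(n, s)) (r : nat) :=
  #|[set X : 'M[K]_(p, s) | (\rank X == r) && (X <= F)%MS]|.

Lemma card_rank_col_mx p n s (F : 'M[K]_(n, s)) (X : 'M[K]_(p, s)) (r : nat) :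
  (X <= F)%MS ->
  #|[set u : 'rV[K]_s | (\rank (col_mx u X) == r) && (u <= F)%MS]| =
  ((\rank X == r) * q ^ \rank X + ((\rank X).+1 == r) * (q ^ \rank F - q ^ \rank X))%N.
Proof.
move=> sXF; set a := \rank X.
have rankE (u : 'rV[K]_s) : \rank (col_mx u X) = (a + ~~ (u <= X)%MS)%N.
  exact: rank_col_mx_rV.
have [->|neq] := eqVneq r a.
  rewrite eqn_leq ltnn /= mul1n addn0 -card_rV_submx; apply: eq_card => u; rewrite !inE rankE.
  case: (boolP (u <= X)%MS) => [uX|_]; first by rewrite addn0 eqxx (submx_trans uX sXF).
  by rewrite addn1 eqn_leq ltnn.
have [->|neq1] := eqVneq r a.+1.
  rewrite /= mul1n add0n -!card_rV_submx.
  have sub_uF : [set u : 'rV[K]_s | (u <= X)%MS] \subset [set u | (u <= F)%MS].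
    by apply/subsetP => u; rewrite !inE => uX; apply: submx_trans uX sXF.
  rewrite -(setIidPr sub_uF) -cardsD; apply: eq_card => u; rewrite !inE rankE.
  by case: (u <= X)%MS; rewrite /= ?addn0 ?addn1 ?eqxx // eqn_leq ltnn andbF.
apply: eq_card0 => u; rewrite !inE rankE.
by case: (u <= X)%MS; rewrite ?addn0 ?addn1 eq_sym ?(negbTE neq) ?(negbTE neq1).
Qed.

Lemma count_rank_submx_col p n s (F : 'M[K]_(n, s)) (r : nat) :
  count_rank_submx p.+1 F r =
  (\sum_(X : 'M[K]_(p, s) | (X <= F)%MS)
     #|[set u : 'rV[K]_s | (\rank (col_mx u X) == r) && (u <= F)%MS]|)%N.
Proof.
have col_bij : bijective (fun uX : 'rV[K]_s * 'M[K]_(p, s) => col_mx uX.1 uX.2).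
  exists (fun Y : 'M[K]_(1 + p, s) => (usubmx Y, dsubmx Y)) => [[u X]|Y] /=.
    by rewrite col_mxKu col_mxKd.
  by rewrite vsubmxK.
rewrite /count_rank_submx -(on_card_preimset (onW_bij _ col_bij)).
rewrite (eq_card (B := [set uX | (\rank (col_mx uX.1 uX.2) == r)
                                  && (col_mx uX.1 uX.2 <= F)%MS])); last first.
  by move=> uX; rewrite !inE.
rewrite (card_pair_sum (fun u X => (\rank (col_mx u X) == r) && (col_mx u X <= F)%MS)).
rewrite [RHS]big_mkcond /=; apply: eq_bigr => X _.
case: (boolP (X <= F)%MS) => sXF.
  by apply: eq_card => u; rewrite !inE col_mx_sub sXF andbT.
by apply: eq_card0 => u; rewrite !inE col_mx_sub (negbTE sXF) !andbF.
Qed.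

Lemma count_rank_submxE p n s (F : 'M[K]_(n, s)) (r : nat) :
  count_rank_submx p F r = (\sum_(X : 'M[K]_(p, s) | (X <= F)%MS) (\rank X == r))%N.
Proof. by rewrite /count_rank_submx -sum1dep_card big_mkcondl. Qed.

Lemma count_rank_submx0 n s (F : 'M[K]_(n, s)) (r : nat) :
  count_rank_submx 0 F r = (r == 0)%N.
Proof.
rewrite count_rank_submxE (big_pred1 0) ?mxrank0 1?eq_sym // => X.
by rewrite (flatmx0 X) sub0mx /= eqxx.
Qed.

Lemma count_rank_submx_gt p n s (F : 'M[K]_(n, s)) (r : nat) :
  (\rank F < r)%N -> count_rank_submx p F r = 0%N.
Proof.
move=> ltFr; rewrite count_rank_submxE big1 // => X /mxrankS leXF.
by apply/eqP; rewrite eqb0; apply: contraTneq ltFr => <-; rewrite -leqNgt.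
Qed.

Lemma count_rank_submx_step p n s (F : 'M[K]_(n, s)) (r : nat) :
  count_rank_submx p.+1 F r =
  (\sum_(X : 'M[K]_(p, s) | (X <= F)%MS)
     ((\rank X == r) * q ^ \rank X + ((\rank X).+1 == r) * (q ^ \rank F - q ^ \rank X)))%N.
Proof. by rewrite count_rank_submx_col; apply: eq_bigr => X; apply: card_rank_col_mx. Qed.

Lemma count_rank_submxS0 p n s (F : 'M[K]_(n, s)) :
  count_rank_submx p.+1 F 0 = count_rank_submx p F 0.
Proof.
rewrite count_rank_submx_step count_rank_submxE; apply: eq_bigr => X _.
by case: eqP => [->|]; rewrite ?muln0 ?addn0 ?mul0n.
Qed.

Lemma count_rank_submxSS p n s (F : 'M[K]_(n, s)) (r : nat) :
  count_rank_submx p.+1 F r.+1 =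
  (count_rank_submx p F r.+1 * q ^ r.+1 + count_rank_submx p F r * (q ^ \rank F - q ^ r))%N.
Proof.
rewrite count_rank_submx_step !count_rank_submxE !big_distrl -big_split /=.
apply: eq_bigr => X _; rewrite eqSS.
by case: eqP => [->|]; case: eqP => [->|]; rewrite ?mul0n ?mul1n.
Qed.

End RankCount.

Section IndepTuples.
Variables (R : realFieldType) (K : finFieldType).
Local Notation q := #|K|.
Local Notation Q := (q%:R : R).

(* [indep_tuples n r] is the number of linearly independent r-tuples in F_q^n. *)
Definition indep_tuples n r : R := \prod_(j < r) (Q ^+ n - Q ^+ j).

Lemma natr_card_neq0 : Q != 0.
Proof. by rewrite pnatr_eq0 -lt0n ltnW // card_finNzRing_gt1. Qed.

Lemma eqr_expQ a b : (Q ^+ a == Q ^+ b) = (a == b).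
Proof. by rewrite -!natrX eqr_nat eqn_exp2l // card_finNzRing_gt1. Qed.

Lemma indep_tuplesSr n r : indep_tuples n r.+1 = indep_tuples n r * (Q ^+ n - Q ^+ r).
Proof. exact: big_ord_recr. Qed.

Lemma indep_tuplesSS n r :
  indep_tuples n.+1 r.+1 = (Q ^+ n.+1 - 1) * Q ^+ r * indep_tuples n r.
Proof.
rewrite /indep_tuples big_ord_recl expr0 -mulrA; congr (_ * _).
rewrite (eq_bigr (fun j : 'I_r => Q * (Q ^+ n - Q ^+ j))) => [|j _]; last first.
  by rewrite lift0 !exprS mulrBr.
by rewrite big_split /= prodr_const card_ord.
Qed.

Lemma indep_tuples_eq0 n r : (n < r)%N -> indep_tuples n r = 0.
Proof. by move=> ltnr; apply/eqP/prodf_eq0; exists (Ordinal ltnr); rewrite /= ?subrr. Qed.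

Lemma indep_tuples_neq0 n r : (r <= n)%N -> indep_tuples n r != 0.
Proof.
move=> lern; apply/prodf_neq0 => j _; rewrite subr_eq0 eqr_expQ.
by rewrite gtn_eqF // (leq_trans (ltn_ord j)).
Qed.

Lemma count_rank_submx_indep p n s (F : 'M[K]_(n, s)) (r : nat) :
  (count_rank_submx p F r)%:R * indep_tuples r r =
  indep_tuples p r * indep_tuples (\rank F) r.
Proof.
elim: p r => [|p IH] [|r].
- by rewrite count_rank_submx0 /indep_tuples !big_ord0 !mulr1.
- by rewrite count_rank_submx0 (indep_tuples_eq0 (ltn0Sn r)) /= !mul0r.
- by rewrite count_rank_submxS0 IH /indep_tuples !big_ord0.
have recE : (count_rank_submx p.+1 F r.+1)%:R =
    (count_rank_submx p F r.+1)%:R * Q ^+ r.+1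
    + (count_rank_submx p F r)%:R * (Q ^+ \rank F - Q ^+ r) :> R.
  rewrite count_rank_submxSS natrD !natrM natrX; congr (_ + _).
  have [le_rF|lt_Fr] := leqP r (\rank F).
    by rewrite natrB ?leq_exp2l ?card_finNzRing_gt1 // !natrX.
  by rewrite count_rank_submx_gt // !mul0r.
move: (IH r.+1) (IH r); rewrite recE !indep_tuplesSS !indep_tuplesSr !exprSr.
set c1 := (count_rank_submx p F r.+1)%:R; set c0 := (count_rank_submx p F r)%:R.
set D := indep_tuples r r => IH1 IH0.
transitivity (Q ^+ r * Q * (c1 * ((Q ^+ r * Q - 1) * Q ^+ r * D))
   + (Q ^+ \rank F - Q ^+ r) * (Q ^+ r * Q - 1) * Q ^+ r * (c0 * D)); first by ring.
by rewrite IH1 IH0; ring.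
Qed.

Lemma NM_indep a b r :
  NM R q a b r = indep_tuples a r * indep_tuples b r / indep_tuples r r.
Proof. by rewrite /NM prodf_div big_split. Qed.

Lemma count_rank_submx_NM p n s (F : 'M[K]_(n, s)) (r : nat) :
  (count_rank_submx p F r)%:R = NM R q p (\rank F) r.
Proof.
by rewrite NM_indep -count_rank_submx_indep mulfK // indep_tuples_neq0.
Qed.

Lemma gauss_binom_indep d r : (r <= d)%N ->
  gauss_binom R q d r = indep_tuples d r / indep_tuples r r.
Proof.
move=> le_rd; rewrite /gauss_binom -prodf_div; apply: eq_bigr => j _.
have expB k : (j <= k)%N -> Q ^+ k - Q ^+ j = Q ^+ j * (Q ^+ (k - j) - 1).
  by move=> le_jk; rewrite mulrBr mulr1 -exprD subnKC.
rewrite !expB ?(leq_trans (ltnW (ltn_ord j))) // -mulf_div divff ?mul1r //.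
by rewrite expf_neq0 // natr_card_neq0.
Qed.

Lemma NM_Phi a b d r : (d <= b)%N -> NM R q a d r = NM R q a b r * Phi R q b r d.
Proof.
move=> le_db; rewrite /Phi; case: leqP => [le_rd|lt_dr]; last first.
  by rewrite [RHS]mulr0 NM_indep (indep_tuples_eq0 lt_dr) mulr0 mul0r.
have le_rb := leq_trans le_rd le_db.
rewrite !gauss_binom_indep // !NM_indep.
by field; rewrite !indep_tuples_neq0.
Qed.

End IndepTuples.

Lemma NM_sym (R : realFieldType) q a b r : NM R q a b r = NM R q b a r.
Proof. by apply: eq_bigr => j _; rewrite [(_ - _) * _]mulrC. Qed.

Section BlockSupport.
Variable K : finFieldType.

Definition count_rank_block m eta (E : 'M[K]_(minn m eta)) (r : nat) :=
  #|[set B : 'M[K]_(m, eta) | (\rank B == r) && (blk_supp B <= E)%MS]|.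

Lemma count_rank_blockE m eta (E : 'M[K]_(minn m eta)) (r : nat) :
  count_rank_block E r =
  if (eta <= m)%N then count_rank_submx m E r else count_rank_submx eta E r.
Proof.
rewrite /count_rank_block /blk_supp; case: ifP => le_em.
  move: E; have := minn_idPr le_em; move: (minn m eta) => mu eq_mu E; subst mu.
  by apply: eq_card => B; rewrite !inE conform_mx_id genmxE.
have lt_me : (m < eta)%N by rewrite ltnNge le_em.
move: E; have := minn_idPl (ltnW lt_me); move: (minn m eta) => mu eq_mu E; subst mu.
rewrite /count_rank_submx -(on_card_preimset (f := @trmx K m eta)).
  by apply: eq_card => B; rewrite !inE conform_mx_id genmxE mxrank_tr.
by apply: onW_bij; exists (@trmx K eta m); apply: trmxK.
Qed.

Lemma count_rank_block_NM (R : realFieldType) m eta (E : 'M[K]_(minn m eta))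
    (r : nat) :
  (count_rank_block E r)%:R = NM R #|K| m eta r * Phi R #|K| (minn m eta) r (\rank E).
Proof.
have : (\rank E <= minn m eta)%N by apply: rank_leq_col.
rewrite count_rank_blockE; case: ifP => [le_em|gt_em]; rewrite count_rank_submx_NM;
  move: (\rank E) => d.
  by rewrite (minn_idPr le_em); apply: NM_Phi.
have lt_me : (m < eta)%N by rewrite ltnNge gt_em.
by rewrite (minn_idPl (ltnW lt_me)) [NM _ _ m eta r]NM_sym; apply: NM_Phi.
Qed.

Lemma NM_Phi_ge0 (R : realFieldType) m eta r d : (d <= minn m eta)%N ->
  0 <= NM R #|K| m eta r * Phi R #|K| (minn m eta) r d.
Proof.
move=> le_dmu; have := count_rank_block_NM R (pid_mx d : 'M[K]_(minn m eta)) r.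
by rewrite rank_pid_mx // => <-.
Qed.

End BlockSupport.

Section GoodVectors.
Variables (K : finFieldType) (m eta l : nat).
Local Notation mu := (minn m eta).

Definition rank_profile (x : vecT K m eta l) : {ffun 'I_l -> 'I_mu.+1} :=
  [ffun i => inord (\rank (x i))].

Lemma rank_profileE x i : rank_profile x i = \rank (x i) :> nat.
Proof. by rewrite ffunE inordK // ltnS leq_min rank_leq_row rank_leq_col. Qed.

Lemma card_good w (F : {ffun 'I_l -> 'M[K]_mu}) :
  #|[set x : vecT K m eta l | good w F x]| =
  (\sum_(ww in Wset l mu w) \prod_i count_rank_block (F i) (ww i))%N.
Proof.
rewrite -sum1dep_card (partition_big rank_profile (mem (Wset l mu w))) /=; last first.
  move=> x /andP[/eqP <- _]; rewrite inE; apply/eqP/eq_bigr => i _; exact: rank_profileE.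
apply: eq_bigr => ww; rewrite inE => /eqP sum_ww.
rewrite sum1dep_card /count_rank_block -card_ffun_forall; apply: eq_card => x; rewrite !inE.
apply/idP/forallP => [/andP[/andP[_ /forallP suppF] /eqP <-] i | Hx].
  by rewrite inE rank_profileE eqxx suppF.
have rkx i : \rank (x i) = ww i by have := Hx i; rewrite inE => /andP[/eqP].
rewrite /good /wtSR (eq_bigr _ (fun i _ => rkx i)) sum_ww eqxx /=.
apply/andP; split; first by apply/forallP => i; have := Hx i; rewrite inE => /andP[].
by apply/eqP/ffunP => i; apply: val_inj; rewrite /= rank_profileE rkx.
Qed.

End GoodVectors.

Lemma ler_avg (R : realFieldType) (T : finType) (P : pred T) (f : T -> R) (b : R) :
  0 <= b -> (forall x, P x -> f x <= b) ->
  \sum_(x | P x) (#|[set x | P x]|%:R)^-1 * f x <= b.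
Proof.
move=> b_ge0 le_fb; rewrite -mulr_sumr.
have [->|cardP_gt0] := posnP #|[set x | P x]|; first by rewrite invr0 mul0r.
apply: le_trans (_ : (#|[set x | P x]|%:R)^-1 * (#|[set x | P x]|%:R * b) <= b).
  rewrite ler_wpM2l ?invr_ge0 // -sum1dep_card natr_sum mulr_suml.
  by apply: ler_sum => x Px; rewrite mul1r le_fb.
by rewrite mulKf // pnatr_eq0 -lt0n.
Qed.

Section Probability.
Variables (R : realFieldType) (K : finFieldType) (m eta l : nat).
Local Notation mu := (minn m eta).
Local Notation q := #|K|.
Local Notation Q := (q%:R : R).
Local Notation T := #|{: vecT K m eta l}|.

Definition ngood w (vv : {ffun 'I_l -> 'I_mu.+1}) : R :=
  \sum_(ww in Wset l mu w) \prod_i (NM R q m eta (ww i) * Phi R q mu (ww i) (vv i)).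

Lemma card_good_ngood w (F : {ffun 'I_l -> 'M[K]_mu})
    (vv : {ffun 'I_l -> 'I_mu.+1}) :
  (forall i, \rank (F i) = vv i) ->
  (#|[set x : vecT K m eta l | good w F x]|)%:R = ngood w vv.
Proof.
move=> rkF; rewrite card_good natr_sum; apply: eq_bigr => ww _.
by rewrite natr_prod; apply: eq_bigr => i _; rewrite count_rank_block_NM rkF.
Qed.

Lemma ngood_ge0 w vv : 0 <= ngood w vv.
Proof.
apply: sumr_ge0 => ww _; apply: prodr_ge0 => i _.
apply: NM_Phi_ge0; exact: (ltn_ord (vv i)).
Qed.

Lemma prob_codewords_le w N (F : {ffun 'I_l -> 'M[K]_mu}) (y : vecT K m eta l) :
  prob_codewords R w N F y <=
  N%:R / T%:R * (#|[set x : vecT K m eta l | good w F x]|)%:R.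
Proof.
set G := [set x | good w F x].
pose shift (c : vecT K m eta l) : vecT K m eta l := [ffun i => y i - c i].
have shift_inj : injective shift.
  by move=> c1 c2 /ffunP eq12; apply/ffunP => i; have := eq12 i; rewrite !ffunE => /subrI.
have card_shift : #|[pred c | good w F (shift c)]| = #|G|.
  by rewrite -(card_preimset G shift_inj); apply: eq_card => c; rewrite !inE.
have T_gt0 : (0 < T)%N by apply/card_gt0P; exists 0.
apply: (@le_trans _ _ ((N * #|G| * T ^ N.-1)%:R / (T ^ N)%:R)).
  rewrite ler_wpM2r ?invr_ge0 // ler_nat -card_shift.
  exact: (card_ffun_exists_leq N (fun c => good w F (shift c))).
case: N => [|N]; first by rewrite !mul0r.
rewrite expnS !natrM natrX /= le_eqVlt; apply/orP; left; apply/eqP.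
have T_neq0 : T%:R != 0 :> R by rewrite pnatr_eq0 -lt0n.
by field; rewrite T_neq0 expf_neq0.
Qed.

Lemma probX_le v w N alpha (y : vecT K m eta l) : (forall vv, 0 <= alpha vv) ->
  probX v w N alpha y <= N%:R / T%:R * \sum_(vv in Wset l mu v) alpha vv * ngood w vv.
Proof.
move=> alpha_ge0; rewrite /probX mulr_sumr; apply: ler_sum => vv _.
rewrite mulrCA; apply: ler_wpM2l => //.
rewrite -natr_prod -card_ffun_forall.
apply: ler_avg => [|F /forallP famF].
  by rewrite mulr_ge0 ?divr_ge0 ?ngood_ge0.
rewrite -(card_good_ngood w (F := F)); first exact: prob_codewords_le.
by move=> i; have := famF i; rewrite inE => /andP[_ /eqP].
Qed.

Lemma sum_alpha_ngood v w (alpha : {ffun 'I_l -> 'I_mu.+1} -> R) :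
  \sum_(vv in Wset l mu v) alpha vv * ngood w vv =
  \sum_(ww in Wset l mu w) phibar q v alpha ww * \prod_i NM R q m eta (ww i).
Proof.
under eq_bigr do rewrite mulr_sumr.
rewrite exchange_big /=; apply: eq_bigr => ww _.
rewrite /phibar mulr_suml; apply: eq_bigr => vv _.
by rewrite big_split /= mulrA mulrAC.
Qed.

Lemma codeword_ratio_le k :
  (q ^ (m * k) - 1)%:R / T%:R <= Q ^ (m%:Z * (k%:Z - (l * eta)%:Z)).
Proof.
rewrite mulrBr -!PoszM expfzDr ?natr_card_neq0 // -exprnN card_ffun card_mx card_ord -expnM.
by rewrite -exprnP -!natrX (mulnC l eta) mulnA ler_wpM2r ?invr_ge0 // ler_nat leq_subr.
Qed.

End Probability.

Theorem mainTheorem4 (R : realFieldType) (K : finFieldType) (m eta l k v w : nat)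
  (alpha : {ffun 'I_l -> 'I_(minn m eta).+1} -> R) (y : vecT K m eta l) :
  (1 <= m)%N -> (1 <= eta)%N -> (1 <= l)%N -> (1 <= k)%N ->
  (w <= v)%N -> (v <= l * minn m eta)%N ->
  (forall vv, 0 <= alpha vv) ->
  (forall vv, vv \notin Wset l (minn m eta) v -> alpha vv = 0) ->
  \sum_(vv in Wset l (minn m eta) v) alpha vv = 1 ->
  probX v w (#|K| ^ (m * k) - 1) alpha y <=
    (#|K|%:R : R) ^ ((m%:Z) * (k%:Z - (l * eta)%:Z))
    * \sum_(ww in Wset l (minn m eta) w)
        phibar #|K| v alpha ww * \prod_(i < l) NM R #|K| m eta (ww i).
Proof.
move=> _ _ _ _ _ _ alpha_ge0 _ _.
apply: le_trans (probX_le v w _ y alpha_ge0) _.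
rewrite sum_alpha_ngood ler_wpM2r ?codeword_ratio_le //.
rewrite -sum_alpha_ngood; apply: sumr_ge0 => vv _.
by rewrite mulr_ge0 ?ngood_ge0.
Qed.
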